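(* For every real skew-symmetric matrix $S$ there exist real orthogonal matrices $Q_1,Q_2$ and a positive number $c\ge\lambda_{\max}(S)/2$ such that $S=c\,(Q_1+Q_2)$, where $\lambda_{\max}(S)$ is the maximum singular value of $S$. *)

From mathcomp Require Import all_boot all_order all_algebra.
From mathcomp Require Import reals.
Set Implicit Arguments. Unset Strict Implicit. Unset Printing Implicit Defensive.
Import Order.TTheory GRing.Theory Num.Theory.
Local Open Scope ring_scope.

Definition skew_symmetric (R : realType) (n : nat) (S : 'M[R]_n) : Prop :=
  S^T = - S.

Definition orthogonal_mx (R : realType) (n : nat) (Q : 'M[R]_n) : Prop :=
  Q *m Q^T = 1%:M.

Definition singular_value (R : realType) (n : nat) (A : 'M[R]_n) (s : R) : Prop :=
  0 <= s /\ eigenvalue (A^T *m A) (s ^+ 2).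

Definition max_singular_value (R : realType) (n : nat) (A : 'M[R]_n) (s : R) : Prop :=
  singular_value A s /\ forall t, singular_value A t -> t <= s.

From mathcomp Require Import all_boot all_order all_algebra.
From mathcomp Require Import reals complex polyrcf.
From mathcomp.algebra_tactics Require Import ring lra.
Import Order.TTheory GRing.Theory Num.Theory.
Set Implicit Arguments. Unset Strict Implicit. Unset Printing Implicit Defensive.
Local Open Scope ring_scope.

(* Put A := S / (2c), so that A^T = -A and A^2 = -S^T S / (2c)^2. If the
   eigenvalues of S^T S are at most (2c)^2, i.e. c >= lambda_max(S) / 2, the
   positive semidefinite matrix 1 + A^2 has a symmetric square root N commuting
   with A; then (A + N)(A + N)^T = (A - N)(A - N)^T = N^2 - A^2 = 1 and
   S = c ((A + N) + (A - N)). As the minimal polynomial of the real symmetric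
   matrix S^T S has simple real roots (spectral theorem over R[i]), N can be
   taken to be a polynomial in S^T S that interpolates the square root on its
   eigenvalues. For c we take the square root of the Cauchy bound of the
   characteristic polynomial of S^T S. *)

Lemma interpolation_poly (F : fieldType) (s : seq F) (f : F -> F) : uniq s ->
  exists p : {poly F}, {in s, forall x, p.[x] = f x}.
Proof.
elim: s => [|x s IHs] /=; first by exists 0.
case/andP=> x_notin_s /IHs[p pE]; pose q := \prod_(y <- s) ('X - y%:P).
have qx_neq0 : q.[x] != 0 by rewrite -/(root _ _) root_prod_XsubC.
exists (p + ((f x - p.[x]) / q.[x]) *: q) => y; rewrite inE hornerD hornerZ.
case/predU1P=> [->|y_in_s]; first by rewrite mulfVK // addrC subrK.
have /eqP-> : root q y by rewrite root_prod_XsubC.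
by rewrite mulr0 addr0 pE.
Qed.

Lemma horner_mx_eq_on_roots (F : fieldType) n (B : 'M[F]_n.+1) (s : seq F)
    (p q : {poly F}) :
  uniq s -> horner_mx B (\prod_(x <- s) ('X - x%:P)) = 0 ->
  {in s, forall x, p.[x] = q.[x]} -> horner_mx B p = horner_mx B q.
Proof.
move=> s_uniq Bs0 pq_eq; apply/eqP; rewrite -subr_eq0 -rmorphB /=.
have /dvdpP[r ->] : \prod_(x <- s) ('X - x%:P) %| p - q.
  apply: uniq_roots_dvdp; last by rewrite uniq_rootsE.
  by apply/allP => x xs; rewrite /root !hornerE pq_eq ?subrr.
by rewrite rmorphM /= Bs0 mulr0.
Qed.

Lemma horner_mx_sqrt (R : rcfType) n (B : 'M[R]_n.+1) (s : seq R)
    (q : {poly R}) :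
  uniq s -> horner_mx B (\prod_(x <- s) ('X - x%:P)) = 0 ->
  {in s, forall x, 0 <= q.[x]} ->
  exists p, horner_mx B p *m horner_mx B p = horner_mx B q.
Proof.
move=> s_uniq Bs0 q_ge0.
have [p pE] := @interpolation_poly _ s (fun x => Num.sqrt q.[x]) s_uniq.
exists p; rewrite mulmxE -rmorphM; apply: (horner_mx_eq_on_roots s_uniq) => // x xs.
by rewrite hornerM pE // -expr2 sqr_sqrtr ?q_ge0.
Qed.

Lemma trmx_horner (R : comNzRingType) n (B : 'M[R]_n.+1) (p : {poly R}) :
  (horner_mx B p)^T = horner_mx B^T p.
Proof.
elim/poly_ind: p => [|p c IHp]; first by rewrite !rmorph0 trmx0.
rewrite !rmorphD !rmorphM /= !horner_mx_X !horner_mx_C linearD /= tr_scalar_mx.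
rewrite -!mulmxE trmx_mul IHp; congr (_ + _).
exact: comm_mx_horner (comm_mx_refl B^T).
Qed.

Lemma realsym_mxminpoly_split (R : rcfType) n (B : 'M[R]_n.+1) : B^T = B ->
  exists2 s : seq R, uniq s & mxminpoly B = \prod_(x <- s) ('X - x%:P).
Proof.
move=> Bsym; pose f : {rmorphism R -> R[i]} := real_complex R.
have BC_herm : map_mx f B \is hermsymmx.
  apply: realsym_hermsym.
    by apply/is_hermitianmxP; rewrite expr0 scale1r map_mx_id // map_trmx Bsym.
  by apply/mxOverP => i j; rewrite mxE CrealE; apply/eqP/conjc_real.
have /orthomx_spectralP BCE := hermitian_normalmx BC_herm.
have /mxOverP d_real := hermitian_spectral_diag_real BC_herm.
set d := spectral_diag _ in BCE d_real.
pose s := [seq complex.Re (d 0 i) | i <- enum 'I_n.+1].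
have dE : [seq d 0 i | i <- enum 'I_n.+1] = map f s.
  rewrite -[RHS]map_comp; apply: eq_map => i /=.
  by rewrite complexRe; apply/esym/Creal_ReP/d_real.
exists (undup s); first exact: undup_uniq.
apply: (map_poly_inj f); rewrite -mxminpoly_map BCE -conjVmx ?spectral_unit //.
rewrite mxminpoly_uconj ?unitmx_inv ?spectral_unit // mxminpoly_diag dE.
rewrite undup_map_inj; last exact: fmorph_inj.
by rewrite rmorph_prod big_map; apply: eq_bigr => x _ /=; rewrite map_polyXsubC.
Qed.

Lemma eigenvalue_norm_lt_cauchy_bound (R : realFieldType) n (A : 'M[R]_n) x :
  eigenvalue A x -> `|x| < cauchy_bound (char_poly A).
Proof.
rewrite eigenvalue_root_char => /rootP; apply: cauchy_boundP.
exact/monic_neq0/char_poly_monic.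
Qed.

Lemma skew_add_sqrt_orthogonal (R : realType) n (A N : 'M[R]_n) :
  skew_symmetric A -> N^T = N -> A *m N = N *m A -> N *m N = 1%:M + A *m A ->
  orthogonal_mx (A + N) /\ orthogonal_mx (A - N).
Proof.
rewrite /skew_symmetric /orthogonal_mx => AT NT AN NN; split.
  rewrite linearD /= AT NT mulmxDl !mulmxDr !mulmxN AN NN.
  by rewrite addrA addrK addrC addrK.
rewrite linearB /= AT NT mulmxBl !mulmxBr !mulmxN AN NN.
by rewrite opprD !opprK addrA subrK addrC addrK.
Qed.

Lemma skew_eq_scaled_sum_orthogonal (R : realType) n (S : 'M[R]_n) (c : R) :
  skew_symmetric S -> 0 < c ->
  (forall x, eigenvalue (S^T *m S) x -> x <= (2 * c) ^+ 2) ->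
  exists Q1 Q2, [/\ orthogonal_mx Q1, orthogonal_mx Q2 & S = c *: (Q1 + Q2)].
Proof.
case: n S => [|n] S Sskew c_gt0 STS_le.
  by exists 0, 0; split; apply/matrixP => -[].
pose B := S^T *m S; have B_sym : B^T = B by rewrite trmx_mul trmxK.
have [s s_uniq minB] := realsym_mxminpoly_split B_sym.
pose q := 1 - (2 * c) ^- 2 *: 'X.
have q_ge0 : {in s, forall x, 0 <= q.[x]}.
  move=> x; rewrite -root_prod_XsubC -minB -eigenvalue_root_min => /STS_le.
  have c2_gt0 : 0 < (2 * c) ^+ 2 by rewrite exprn_gt0 ?mulr_gt0.
  by rewrite !hornerE subr_ge0 ler_pdivrMl // mulr1.
have Bs0 : horner_mx B (\prod_(x <- s) ('X - x%:P)) = 0.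
  by rewrite -minB mx_root_minpoly.
have [p NN] := horner_mx_sqrt s_uniq Bs0 q_ge0.
set N := horner_mx B p in NN.
pose A := (2 * c)^-1 *: S.
have [A_plus_N A_minus_N] : orthogonal_mx (A + N) /\ orthogonal_mx (A - N).
  apply: skew_add_sqrt_orthogonal.
  - by rewrite /skew_symmetric linearZ /= Sskew scalerN.
  - by rewrite trmx_horner B_sym.
  - rewrite -scalemxAl -scalemxAr; congr (_ *: _).
    by apply: comm_mx_horner; rewrite /comm_mx /B Sskew !mulNmx mulmxN mulmxA.
  - rewrite [LHS]NN /q rmorphB rmorph1 -mul_polyC rmorphM /= horner_mx_C.
    rewrite horner_mx_X -mulmxE mul_scalar_mx /A -scalemxAl -scalemxAr scalerA.
    by rewrite -exprVn expr2 /B Sskew mulNmx scalerN opprK.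
exists (A + N), (A - N); split => //.
rewrite addrACA subrr addr0 -scalerDl scalerA.
have -> : c * ((2 * c)^-1 + (2 * c)^-1) = 1 by field; lra.
by rewrite scale1r.
Qed.

Theorem mainTheorem18 (R : realType) (n : nat) (S : 'M[R]_n) :
  skew_symmetric S ->
  exists (Q1 Q2 : 'M[R]_n) (c : R),
    [/\ orthogonal_mx Q1, orthogonal_mx Q2, 0 < c,
        (forall smax, max_singular_value S smax -> smax / 2 <= c) &
        S = c *: (Q1 + Q2)].
Proof.
move=> Sskew; pose c := Num.sqrt (cauchy_bound (char_poly (S^T *m S))).
have c_gt0 : 0 < c by rewrite sqrtr_gt0 cauchy_bound_gt0.
have STS_le x : eigenvalue (S^T *m S) x -> x <= c ^+ 2.
  move/eigenvalue_norm_lt_cauchy_bound/ltW.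
  by rewrite sqr_sqrtr ?cauchy_bound_ge0 //; apply/le_trans/ler_norm.
have STS_le2c x : eigenvalue (S^T *m S) x -> x <= (2 * c) ^+ 2.
  by move/STS_le; rewrite exprMn; nra.
have [Q1 [Q2 [Q1_orth Q2_orth S_eq]]] :=
  skew_eq_scaled_sum_orthogonal Sskew c_gt0 STS_le2c.
exists Q1, Q2, c; split=> // smax [[smax_ge0 /STS_le smax2_le] _].
by move: smax2_le; rewrite ler_sqr ?nnegrE ?(ltW c_gt0) // => smax_le; lra.
Qed.
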